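(* Let $\mathbf{u}=(u_1,\dots,u_n)$ be a utility profile over $C$, $|C|=m$, and let $R\in\{R^C,R^V\}$. The game $G=(\mathcal{T},R,\mathbf{u})$ admits a PNE with a winning set of size at least $2$ if and only if one of the following conditions holds: (1) each candidate is ranked first by at most one voter, and moreover $\frac{1}{n}\sum_{i\in N}u_\ell(a_i)\ge\max_{i\in N\setminus\{\ell\}}u_\ell(a_i)$ for each $\ell\in N$; (2) there exists a set of candidates $X=\{c_{\ell_1},\dots,c_{\ell_k}\}$ with $2\le k\le\min(n/2,m)$ and a partition of the voters into $k$ groups $N_1,\dots,N_k$ of size $n/k$ each, such that for each $j\in[k]$ and each $i\in N_j$ we have $c_{\ell_j}\succ_i c$ for all $c\in X\setminus\{c_{\ell_j}\}$, and moreover $\frac{1}{k}\sum_{c\in X}u_i(c)\ge\max_{c\in X\setminus\{c_{\ell_j}\}}u_i(c)$. Further, if condition (1) holds, then $G$ has a PNE where each voter votes for her top candidate, and if condition (2) holds for some $X$, then $G$ has a PNE where each voter votes for her favorite candidate in $X$. The game $G$ has no other PNE with a winning set of size at least $2$.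
   Context: Let $C=\{c_1,\dots,c_m\}$ be candidates and $N=\{1,\dots,n\}$ voters; $[k]=\{1,\dots,k\}$. Each voter $i$ has an injective utility function $u_i:C\to\mathbb{N}$ inducing $c\succ_i c'$ iff $u_i(c)>u_i(c')$; $a_i$ is $i$'s top candidate. A ballot vector is $\mathbf{b}=(b_1,\dots,b_n)$ with $b_i\in C\cup\{\bot\}$ ($\bot$ = abstain); $(\mathbf{b}_{-i},b')$ replaces $b_i$ by $b'$. $\mathrm{sc}(c,\mathbf{b})=|\{i:b_i=c\}|$, the winning set $W(\mathbf{b})$ is the set of candidates with maximum score (equal to $C$ if all abstain). If $|W(\mathbf{b})|=1$ its element wins; otherwise under $R^C$ the winner is uniform on $W(\mathbf{b})$, and under $R^V$ a uniformly random voter $i\in N$ is chosen and the winner is $b_i$ if $b_i\in W(\mathbf{b})$, else $i$'s most preferred candidate in $W(\mathbf{b})$. Let $p_j(\mathbf{b})$ be the probability that $c_j$ wins. Fix $0<\varepsilon<\min\{1/m,1/n\}$. In the truth-biased setting $\mathcal{T}$, voter $i$'s utility is $U_i(\mathbf{b})=\sum_jp_j(\mathbf{b})u_i(c_j)$ if $b_i\in C\setminus\{a_i\}$, that plus $\varepsilon$ if $b_i=a_i$, and $-\infty$ if $b_i=\bot$. The game $(\mathcal{T},R,\mathbf{u})$ has players $N$ with action sets $C\cup\{\bot\}$; a PNE is a ballot vector $\mathbf{b}$ with $U_i(\mathbf{b})\ge U_i(\mathbf{b}_{-i},b')$ for all $i$ and all $b'$. *)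

From HB Require Import structures.
From mathcomp Require Import all_boot all_order all_algebra.
Set Implicit Arguments. Unset Strict Implicit. Unset Printing Implicit Defensive.
Import Order.TTheory GRing.Theory Num.Theory.
Local Open Scope ring_scope.

(* Candidates are 'I_m, voters are 'I_n; u i c = u_i(c) : nat.
   A ballot vector b : 'I_n -> option 'I_m  (None = abstain, bottom). *)
Section Voting.
Variables (m n : nat).
Implicit Types (u : 'I_n -> 'I_m -> nat) (b : 'I_n -> option 'I_m).

(* a_i : voter i's top candidate (needs m > 0 for a default). *)
Definition top (hm : (0 < m)%N) u (i : 'I_n) : 'I_m :=
  [arg max_(c > Ordinal hm) u i c].

Definition sc b (c : 'I_m) : nat := #|[set i | b i == Some c]|.

(* winning set: candidates with maximum score (= all of C if all abstain) *)
Definition W b : {set 'I_m} := [set c | [forall c', sc b c' <= sc b c]%N].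

Definition upd b (i : 'I_n) (b' : option 'I_m) : 'I_n -> option 'I_m :=
  fun j => if j == i then b' else b j.

Inductive rule := RC | RV.

(* Under R^V with tie: the chosen voter i makes c win *)
Definition chooses u b (i : 'I_n) (c : 'I_m) : bool :=
  (c \in W b) &&
  (if b i is Some c' then
     if c' \in W b then c' == c else [forall c' in W b, (u i c' <= u i c)%N]
   else [forall c' in W b, (u i c' <= u i c)%N]).

Variable R : realFieldType.

Definition prob (r : rule) u b (c : 'I_m) : R :=
  match r with
  | RC => if c \in W b then (#|W b|%:R)^-1 else 0
  | RV => if #|W b| == 1%N then (if c \in W b then 1 else 0)
          else (#|[set i | chooses u b i c]|%:R) / n%:R
  end.

(* U_i(b), with None standing for -infinity *)
Definition Util (eps : R) (hm : (0 < m)%N) (r : rule) u b (i : 'I_n)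
  : option R :=
  match b i with
  | None => None
  | Some c => Some (\sum_(j : 'I_m) prob r u b j * (u i j)%:R
                    + (if c == top hm u i then eps else 0))
  end.

Definition ext_le (x y : option R) : bool :=
  match x, y with
  | None, _ => true
  | Some _, None => false
  | Some a, Some b => a <= b
  end.

Definition PNE (eps : R) (hm : (0 < m)%N) (r : rule) u b : Prop :=
  forall (i : 'I_n) (b' : option 'I_m),
    ext_le (Util eps hm r u (upd b i b') i) (Util eps hm r u b i).

Definition cond1 (hm : (0 < m)%N) u : Prop :=
  (forall c : 'I_m, #|[set i | top hm u i == c]| <= 1)%N /\
  (forall l i : 'I_n, i != l ->
     (u l (top hm u i))%:R <=
       (n%:R)^-1 * \sum_(i' : 'I_n) ((u l (top hm u i'))%:R : R)).

(* condition (2): X = {c_l1..c_lk}; g i = c_{l_j} for i in N_j, so the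
   groups are the fibres N_j = g^-1(c_{l_j}), each of size n/k. *)
Definition cond2 u (X : {set 'I_m}) (g : 'I_n -> 'I_m) : Prop :=
  let k := #|X| in
  [/\ (2 <= k)%N, (k <= m)%N & (2 * k <= n)%N] /\
  (forall i, g i \in X) /\
  (forall c, c \in X -> #|[set i | g i == c]| * k = n)%N /\
  (forall i c, c \in X -> c != g i -> (u i c < u i (g i))%N) /\
  (forall i c, c \in X -> c != g i ->
     (u i c)%:R <= (k%:R)^-1 * \sum_(c' in X) ((u i c')%:R : R)).

End Voting.

(* Abstaining is worth -oo, so in a PNE everybody votes.  Suppose the winning set W has
   at least two candidates.  Each of them wins with probability more than eps (at least
   1/m under R^C, at least 1/n under R^V), so a voter who does not vote for her favourite
   f in W gains by switching to f, which makes f the sole winner.  Hence every voter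
   votes for her favourite in W, all candidates of W have the same score s = n/|W|, and
   a voter's expected utility is her average utility over W, plus the truth bonus.
   If s = 1 the votes are pairwise distinct and each voter votes for her top candidate
   (moving to an unvoted top candidate would only raise the average); if s >= 2, W and
   the fibres of the profile are as in condition (2).  In both cases the remaining
   inequalities come from deviations to another winner, which become sole winners;
   utilities are integers and eps < 1/|W|, so the truth bonus can be absorbed.
   Conversely, the only other deviation under (2) is a vote outside X: it removes the
   deviator's favourite from the winners, which costs her at least 1/|X| > eps. *)

From HB Require Import structures.
From mathcomp Require Import all_boot all_order all_algebra.
From mathcomp Require Import ring lra.
From Stdlib Require Import FunctionalExtensionality.
Import Order.TTheory GRing.Theory Num.Theory.
Local Open Scope ring_scope.
Set Implicit Arguments. Unset Strict Implicit.

Section Scores.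
Variables m n : nat.
Implicit Types (b : 'I_n -> option 'I_m) (g : 'I_n -> 'I_m).

Definition votes g : 'I_n -> option 'I_m := fun j => Some (g j).

Lemma sc_le_W b c d : c \in W b -> (sc b d <= sc b c)%N.
Proof. by rewrite inE => /forallP. Qed.

Lemma sc_W_eq b c d : c \in W b -> d \in W b -> sc b c = sc b d.
Proof. by move=> hc hd; apply/eqP; rewrite eqn_leq !sc_le_W. Qed.

Lemma W_eq_sc b (Y : {set 'I_m}) y : y \in Y ->
  (forall d, d \in Y -> sc b d = sc b y) -> (forall d, d \notin Y -> (sc b d < sc b y)%N) ->
  W b = Y.
Proof.
move=> hy hin hout; apply/setP => d; rewrite inE; have [dY|dY] := boolP (d \in Y).
  apply/forallP => c; rewrite (hin d dY).
  by have [/hin ->|/hout/ltnW] := boolP (c \in Y).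
by apply/negbTE/negP => /forallP /(_ y); rewrite leqNgt hout.
Qed.

Lemma W_set1 b f : (forall d, d != f -> (sc b d < sc b f)%N) -> W b = [set f].
Proof.
move=> hf; apply: W_eq_sc (set11 f) _ _ => d; first by rewrite inE => /eqP ->.
by rewrite inE; apply: hf.
Qed.

Lemma sc_gt0 b j d : b j = Some d -> (0 < sc b d)%N.
Proof. by move=> hj; rewrite card_gt0; apply/set0Pn; exists j; rewrite inE hj. Qed.

Lemma sc_ge2 b i j d : i != j -> b i = Some d -> b j = Some d -> (2 <= sc b d)%N.
Proof.
move=> hij hi hj; have := cards2 i j; rewrite hij => <-; apply: subset_leq_card.
by apply/subsetP => x; rewrite !inE => /orP[]/eqP->; rewrite ?hi ?hj.
Qed.

Lemma voted_of_W b w :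
  (forall j, b j != None) -> (0 < n)%N -> w \in W b -> exists j, b j = Some w.
Proof.
move=> hS n_gt0 hw; have := hS (Ordinal n_gt0); case hb: (b _) => [c|] // _.
have : (0 < sc b w)%N by apply: leq_trans (sc_gt0 hb) (sc_le_W _ hw).
by rewrite card_gt0 => /set0Pn [j]; rewrite inE => /eqP; exists j.
Qed.

Lemma upd_at b i x : upd b i x i = x.
Proof. by rewrite /upd eqxx. Qed.

Lemma upd_id b i : upd b i (b i) = b.
Proof. by apply: functional_extensionality => j; rewrite /upd; case: eqP => [->|]. Qed.

Lemma upd_votes g i c :
  upd (votes g) i (Some c) = votes (fun j => if j == i then c else g j).
Proof. by apply: functional_extensionality => j; rewrite /upd /votes; case: (j == i). Qed.

Lemma sc_upd_new b i c : sc (upd b i (Some c)) c = ((b i != Some c) + sc b c)%N.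
Proof.
rewrite /sc (_ : [set j | _] = i |: [set j | b j == Some c]); first by rewrite cardsU1 inE.
by apply/setP => j; rewrite !inE /upd; case: (j =P i) => [->|]; rewrite ?eqxx.
Qed.

Lemma sc_upd_old b i c d : c != d ->
  sc b d = ((b i == Some d) + sc (upd b i (Some c)) d)%N.
Proof.
move=> hcd; rewrite /sc (cardsD1 i) inE.
rewrite (_ : _ :\ i = [set j | upd b i (Some c) j == Some d]) //.
apply/setP => j; rewrite !inE /upd; case: (j =P i) => [->|] //=.
by rewrite (inj_eq (@Some_inj _)) (negbTE hcd).
Qed.

Lemma sc_upd_le b i c d : c != d -> (sc (upd b i (Some c)) d <= sc b d)%N.
Proof. by move=> hcd; rewrite (sc_upd_old b i hcd) leq_addl. Qed.

Lemma sc_votes g d : sc (votes g) d = #|[set j | g j == d]|.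
Proof. by apply: eq_card => j; rewrite !inE. Qed.

Lemma sc_votes_notW g d :
  (forall j, g j \in W (votes g)) -> d \notin W (votes g) -> sc (votes g) d = 0%N.
Proof.
move=> gW hd; rewrite sc_votes; apply/eqP; rewrite cards_eq0; apply/eqP/setP => j.
by rewrite !inE; apply/negbTE; apply: contra hd => /eqP <-.
Qed.

Lemma W_of_sc_le1 b j d : (forall c, sc b c <= 1)%N -> b j = Some d -> d \in W b.
Proof. by move=> h1 hj; rewrite inE; apply/forallP => c; apply: leq_trans (h1 c) (sc_gt0 hj). Qed.

Lemma sc_upd_unvoted_le1 b i c :
  (forall d, sc b d <= 1)%N -> sc b c = 0%N -> forall d, (sc (upd b i (Some c)) d <= 1)%N.
Proof.
move=> h1 hc d; have [<-|hcd] := eqVneq c d.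
  by rewrite sc_upd_new hc addn0 leq_b1.
exact: leq_trans (sc_upd_le _ _ hcd) (h1 d).
Qed.

Lemma card_votes_W g w : (forall j, g j \in W (votes g)) -> w \in W (votes g) ->
  n = (#|W (votes g)| * sc (votes g) w)%N.
Proof.
move=> gW hw; transitivity (\sum_(j < n) 1)%N; first by rewrite sum1_card card_ord.
rewrite (partition_big g xpredT) //=.
rewrite (bigID (mem (W (votes g)))) /= [X in (_ + X)%N]big1 => [|d hd]; last first.
  by rewrite sum1dep_card -sc_votes sc_votes_notW.
rewrite addn0 -sum_nat_const; apply: eq_bigr => d hd.
by rewrite sum1dep_card -sc_votes (sc_W_eq hd hw).
Qed.

Lemma votes_distinct g i j : (forall d, sc (votes g) d <= 1)%N -> i != j -> g i != g j.
Proof.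
move=> h1 hij; apply/eqP => gij; have := h1 (g i).
by rewrite leqNgt (@sc_ge2 _ i j) // /votes gij.
Qed.

End Scores.

Section Arithmetic.
Variable R : realFieldType.

Lemma natr_le_avg_absorb (eps : R) (a S k : nat) : (0 < k)%N -> eps < (k%:R)^-1 ->
  (a%:R : R) <= (k%:R)^-1 * S%:R + eps -> (a%:R : R) <= (k%:R)^-1 * S%:R.
Proof.
move=> k_gt0 eps_k h; have k_pos : (0 : R) < k%:R by rewrite ltr0n.
have keps : k%:R * eps < 1 by rewrite -[X in _ < X](mulfV (lt0r_neq0 k_pos)) ltr_pM2l.
have ka : (k%:R : R) * a%:R <= S%:R + k%:R * eps.
  by rewrite -ler_pdivlMl // mulrDr mulrA mulVf ?lt0r_neq0 // mul1r.
have ka_lt : ((k * a)%N%:R : R) < S.+1%:R by rewrite natrM -addn1 natrD; lra.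
by rewrite ler_pdivlMl // -natrM ler_nat -ltnS -(ltr_nat R).
Qed.

Lemma avg_drop_top (K A G : R) : 0 < K -> A <= K * (G - 1) ->
  K^-1 * A <= (K + 1)^-1 * (G + A) - (K + 1)^-1.
Proof.
move=> K_gt0 hA; rewrite -subr_ge0.
have -> : (K + 1)^-1 * (G + A) - (K + 1)^-1 - K^-1 * A = ((K + 1) * K)^-1 * (K * (G - 1) - A).
  by field; apply/andP; split; apply: lt0r_neq0; lra.
by apply: mulr_ge0; [rewrite invr_ge0; apply: mulr_ge0|]; lra.
Qed.

Lemma sum_upd_at (T : Type) n (F : T -> R) (g : 'I_n -> T) i c :
  \sum_j F (if j == i then c else g j) = \sum_j F (g j) - F (g i) + F c.
Proof.
rewrite (bigD1 i) //= eqxx [in RHS](bigD1 i) //= (eq_bigr (F \o g)) => [|j /negbTE-> //].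
by rewrite addrC [F (g i) + _]addrC addrK.
Qed.

Lemma avg_setD1_le (T : finType) (X : {set T}) x (F : T -> R) :
  x \in X -> (0 < #|X :\ x|)%N -> (forall d, d \in X :\ x -> F d <= F x - 1) ->
  (#|X :\ x|%:R)^-1 * \sum_(d in X :\ x) F d <=
    (#|X|%:R)^-1 * \sum_(d in X) F d - (#|X|%:R)^-1.
Proof.
move=> hx hX' hF; rewrite (big_setD1 x hx) (cardsD1 x X) hx add1n -addn1 natrD.
apply: avg_drop_top; first by rewrite ltr0n.
by apply: (le_trans (ler_sum _ hF)); rewrite sumr_const mulr_natl.
Qed.

Lemma invr_card_ge m (X : {set 'I_m}) : (0 < #|X|)%N -> (m%:R : R)^-1 <= (#|X|%:R)^-1.
Proof.
move=> X_gt0; have Xm : (#|X| <= m)%N by rewrite -[X in (_ <= X)%N]card_ord max_card.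
by rewrite lef_pV2 ?posrE ?ltr0n ?ler_nat ?(leq_trans X_gt0).
Qed.

End Arithmetic.

Section Lotteries.
Variables (R : realFieldType) (m n : nat) (u : 'I_n -> 'I_m -> nat) (r : rule).
Hypotheses (u_inj : forall i, injective (u i)) (n_gt0 : (0 < n)%N).
Implicit Types (b : 'I_n -> option 'I_m) (g : 'I_n -> 'I_m).

Lemma prob_set1 b f d : (forall d, d != f -> (sc b d < sc b f)%N) -> prob R r u b d = (d == f)%:R.
Proof.
move=> hf; rewrite /prob (W_set1 hf) cards1 inE.
by case: r; case: (d == f); rewrite //= invr1.
Qed.

Lemma expect_set1 b f (F : 'I_m -> R) : (forall d, d != f -> (sc b d < sc b f)%N) ->
  \sum_d prob R r u b d * F d = F f.
Proof.
move=> hf; rewrite (bigD1 f) //= big1 => [|d hd]; first by rewrite (prob_set1 _ hf) eqxx mul1r addr0.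
by rewrite (prob_set1 _ hf) (negbTE hd) mul0r.
Qed.

Lemma prob_ge0 b d : 0 <= prob R r u b d.
Proof.
by rewrite /prob; case: r; do ![case: ifP => _]; rewrite ?invr_ge0 ?divr_ge0 ?ler0n.
Qed.

Lemma natr_card_set (P : pred 'I_n) : (#|[set j | P j]|%:R : R) = \sum_j (P j)%:R.
Proof.
rewrite -[LHS]mulr1n -sumr_const big_mkcond /=; apply: eq_bigr => j _.
by rewrite inE; case: (P j).
Qed.

Lemma prob_RV b d : #|W b| != 1%N -> prob R RV u b d = (n%:R)^-1 * \sum_j (chooses u b j d)%:R.
Proof. by move=> hW; rewrite /prob (negbTE hW) natr_card_set mulrC. Qed.

Lemma prob_notW b d : (2 <= #|W b|)%N -> d \notin W b -> prob R r u b d = 0.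
Proof.
move=> hW hd; rewrite /prob (negbTE hd); case: r => //.
rewrite ifN ?neq_ltn ?hW ?orbT // (_ : #|_| = 0%N) ?mul0r //.
by apply/eqP; rewrite cards_eq0; apply/eqP/setP => j; rewrite !inE /chooses (negbTE hd).
Qed.

Lemma chooses_inj b j d1 d2 : chooses u b j d1 -> chooses u b j d2 -> d1 = d2.
Proof.
move=> /andP[w1 c1] /andP[w2 c2]; move: c1 c2.
have fav_inj : [forall c in W b, u j c <= u j d1]%N ->
    [forall c in W b, u j c <= u j d2]%N -> d1 = d2.
  move=> /forall_inP h1 /forall_inP h2.
  by apply: (@u_inj j); apply/eqP; rewrite eqn_leq h1 ?h2.
case: (b j) => [c|]; last exact: fav_inj.
by case: ifP => _; [move=> /eqP <- /eqP <- | exact: fav_inj].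
Qed.

Lemma chooses_own b j e d : b j = Some e -> e \in W b -> chooses u b j d = (e == d).
Proof. by move=> hj he; rewrite /chooses hj he; case: eqP => [<-|]; rewrite ?he ?andbF. Qed.

Lemma sum_chooses_le b j (F : 'I_m -> R) B : 0 <= B ->
  (forall d, chooses u b j d -> F d <= B) -> \sum_d (chooses u b j d)%:R * F d <= B.
Proof.
move=> hB hF; have [d0 hd0|none] := pickP (chooses u b j); last first.
  by rewrite big1 // => d _; rewrite none mul0r.
rewrite (bigD1 d0) //= hd0 mul1r big1 ?addr0 ?hF // => d hd.
case hc: (chooses u b j d); last by rewrite mul0r.
by rewrite (chooses_inj hc hd0) eqxx in hd.
Qed.

Lemma sum_chooses_own b j e (F : 'I_m -> R) : b j = Some e -> e \in W b ->
  \sum_d (chooses u b j d)%:R * F d = F e.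
Proof.
move=> hj he; rewrite (bigD1 e) //= (chooses_own _ hj he) eqxx mul1r big1 ?addr0 // => d hd.
by rewrite (chooses_own _ hj he) eq_sym (negbTE hd) mul0r.
Qed.

Lemma expect_uniform b (F : 'I_m -> R) : r = RC \/ #|W b| = 1%N ->
  \sum_d prob R r u b d * F d = (#|W b|%:R)^-1 * \sum_(d in W b) F d.
Proof.
move=> hr; rewrite mulr_sumr [RHS]big_mkcond /=; apply: eq_bigr => d _.
rewrite /prob; case: hr => [->|W1] /=; first by case: ifP; rewrite ?mul0r.
by case: r; rewrite ?W1 ?eqxx invr1; case: ifP; rewrite ?mul0r ?mul1r.
Qed.

Lemma expect_RV b (F : 'I_m -> R) : #|W b| != 1%N ->
  \sum_d prob R RV u b d * F d = (n%:R)^-1 * \sum_j \sum_d (chooses u b j d)%:R * F d.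
Proof.
move=> hW; under eq_bigr do rewrite prob_RV // -mulrA mulr_suml.
by rewrite -mulr_sumr exchange_big.
Qed.

Lemma sum_prob_le1 b : (2 <= #|W b|)%N -> \sum_d prob R r u b d <= 1.
Proof.
move=> hW; rewrite -(eq_bigr _ (fun d _ => mulr1 (prob R r u b d))).
have [rRC|->] : r = RC \/ r = RV by case: r; [left|right].
  rewrite expect_uniform; last by left.
  by rewrite sumr_const -mulr_natr mul1r mulVf // pnatr_eq0 -lt0n (leq_trans _ hW).
rewrite expect_RV ?neq_ltn ?hW ?orbT // ler_pdivrMl ?ltr0n // mulr1.
apply: (@le_trans _ _ (\sum_(j < n) (1 : R))); last by rewrite sumr_const card_ord.
by apply: ler_sum => j _; apply: sum_chooses_le.
Qed.

Lemma prob_W_gt b w (eps : R) : eps < (m%:R)^-1 -> eps < (n%:R)^-1 ->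
  (2 <= #|W b|)%N -> (forall j, b j != None) -> w \in W b -> eps < prob R r u b w.
Proof.
move=> eps_m eps_n hW hS hw; case: r.
  by rewrite /prob hw (lt_le_trans eps_m) // invr_card_ge // (leq_trans _ hW).
rewrite prob_RV ?neq_ltn ?hW ?orbT //; apply: lt_le_trans eps_n _.
have [j hj] := voted_of_W hS n_gt0 hw.
rewrite -[X in X <= _]mulr1 ler_wpM2l ?invr_ge0 ?ler0n // (bigD1 j) //=.
rewrite (chooses_own _ hj hw) eqxx -[X in X <= _]addr0 lerD2l.
by apply: sumr_ge0 => k _; apply: ler0n.
Qed.

Lemma sum_votes g (F : 'I_m -> R) : \sum_j F (g j) = \sum_d (sc (votes g) d)%:R * F d.
Proof.
rewrite (partition_big g xpredT) //=; apply: eq_bigr => d _.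
rewrite sc_votes mulr_natl -sumr_const; apply: congr_big => // j; first by rewrite inE.
by move/eqP->.
Qed.

Section ProfileInW.
Variable g : 'I_n -> 'I_m.
Hypothesis gW : forall j, g j \in W (votes g).

Lemma sum_votes_W (F : 'I_m -> R) w : w \in W (votes g) ->
  \sum_j F (g j) = (sc (votes g) w)%:R * \sum_(d in W (votes g)) F d.
Proof.
move=> hw; rewrite sum_votes (bigID (mem (W (votes g)))) /= [X in _ + X]big1 => [|d hd].
  by rewrite addr0 mulr_sumr; apply: eq_bigr => d hd; rewrite (sc_W_eq hd hw).
by rewrite sc_votes_notW // mul0r.
Qed.

Lemma avg_votes_W (F : 'I_m -> R) :
  (n%:R)^-1 * \sum_j F (g j) = (#|W (votes g)|%:R)^-1 * \sum_(d in W (votes g)) F d.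
Proof.
pose j0 := Ordinal n_gt0; have hs : (sc (votes g) (g j0))%:R != 0 :> R.
  by rewrite pnatr_eq0 -lt0n (@sc_gt0 _ _ _ j0).
rewrite (sum_votes_W _ (gW j0)) {1}(card_votes_W gW (gW j0)) natrM invfM.
by rewrite mulrA -[X in X * _]mulrA mulVf // mulr1.
Qed.

Lemma expect_votes (F : 'I_m -> R) : (2 <= #|W (votes g)|)%N ->
  \sum_d prob R r u (votes g) d * F d = (n%:R)^-1 * \sum_j F (g j).
Proof.
move=> hW; have [rRC|->] : r = RC \/ r = RV by case: r; [left|right].
  by rewrite expect_uniform ?avg_votes_W //; left.
rewrite expect_RV ?neq_ltn ?hW ?orbT //; congr (_ * _).
by apply: eq_bigr => j _; apply: sum_chooses_own (gW j).
Qed.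

End ProfileInW.
End Lotteries.

Section Equilibria.
Variables (R : realFieldType) (m n : nat) (hm : (0 < m)%N) (eps : R)
  (u : 'I_n -> 'I_m -> nat) (r : rule).
Hypotheses (n_ge2 : (2 <= n)%N) (eps_gt0 : 0 < eps)
  (eps_m : eps < (m%:R)^-1) (eps_n : eps < (n%:R)^-1)
  (u_inj : forall i, injective (u i)).
Implicit Types (b : 'I_n -> option 'I_m) (g : 'I_n -> 'I_m).

Local Notation Util := (Util eps hm r u).
Local Notation PNE := (PNE eps hm r u).
Local Notation bonus i c := (if c == top hm u i then eps else 0).

Let n_gt0 : (0 < n)%N := ltnW n_ge2.

Lemma top_max i c : (u i c <= u i (top hm u i))%N.
Proof. by rewrite /top; case: arg_maxnP => // j _; apply. Qed.

Lemma bonus_ge0 i c : 0 <= bonus i c.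
Proof. by case: ifP => _ //; apply: ltW. Qed.

Lemma bonus_le i c : bonus i c <= eps.
Proof. by case: ifP => _ //; apply: ltW. Qed.

Lemma exists_other_voter (i : 'I_n) : exists j, j != i.
Proof.
pose j0 := Ordinal n_gt0; have [->|] := eqVneq i j0; last by exists j0; rewrite eq_sym.
by exists (Ordinal n_ge2).
Qed.

Lemma Util_abstain b i : Util (upd b i None) i = None.
Proof. by rewrite /Util upd_at. Qed.

Lemma PNE_voting b : PNE b -> forall j, b j != None.
Proof.
move=> hP j; apply/negP => /eqP hj.
by have := hP j (Some (Ordinal hm)); rewrite /Util upd_at hj.
Qed.

Lemma Util_set1 b i c : (forall d, (sc b d <= sc b c)%N) -> b i != Some c ->
  Util (upd b i (Some c)) i = Some ((u i c)%:R + bonus i c).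
Proof.
move=> hc hbi; rewrite /Util upd_at; congr (Some (_ + _)).
apply: expect_set1 => d hdc; rewrite sc_upd_new hbi add1n ltnS.
by apply: leq_trans (hc d); apply: sc_upd_le; rewrite eq_sym.
Qed.

Lemma Util_votes g i : (forall j, g j \in W (votes g)) -> (2 <= #|W (votes g)|)%N ->
  Util (votes g) i = Some ((n%:R)^-1 * \sum_j (u i (g j))%:R + bonus i (g i)).
Proof. by move=> gW hW; rewrite /Util /votes -/(votes g) expect_votes. Qed.

(* The lottery loses at least one unit of utility on w, which wins with probability > eps. *)
Lemma lottery_lt b i f w : (2 <= #|W b|)%N -> (forall j, b j != None) ->
  f \in W b -> (forall d, d \in W b -> (u i d <= u i f)%N) -> w \in W b -> w != f ->
  \sum_d prob R r u b d * (u i d)%:R < (u i f)%:R - eps.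
Proof.
move=> hW hS hf fmax hw hwf.
have lose_w : \sum_d prob R r u b d * (u i d)%:R <=
    \sum_d prob R r u b d * ((u i f)%:R - (d == w)%:R).
  apply: ler_sum => d _; have [dW|dW] := boolP (d \in W b); last first.
    by rewrite prob_notW // !mul0r.
  rewrite ler_wpM2l ?prob_ge0 //; have [->|_] := eqVneq d w; last first.
    by rewrite subr0 ler_nat fmax.
  rewrite lerBrDr -natrD ler_nat addn1 ltn_neqAle fmax // andbT.
  by apply: contra hwf => /eqP /u_inj ->.
rewrite (le_lt_trans lose_w) //.
under eq_bigr do rewrite mulrBr.
rewrite sumrB -mulr_suml [X in _ - X](bigD1 w) //= eqxx mulr1.
rewrite [X in _ - (_ + X)]big1 ?addr0 => [|d hd]; last by rewrite (negbTE hd) mulr0.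
have sum_le : (\sum_d prob R r u b d) * (u i f)%:R <= (u i f)%:R.
  by rewrite -[X in _ <= X]mul1r ler_wpM2r ?ler0n ?sum_prob_le1.
have := prob_W_gt u r n_gt0 eps_m eps_n hW hS hw; lra.
Qed.

Lemma PNE_favourite b i : PNE b -> (2 <= #|W b|)%N ->
  exists f, [/\ b i = Some f, f \in W b & forall d, d \in W b -> d != f -> (u i d < u i f)%N].
Proof.
move=> hP hW; have hS := PNE_voting hP.
have [w0 hw0] : exists w0, w0 \in W b by apply/card_gt0P; apply: leq_trans hW.
have [f hf fmax'] := @arg_maxnP _ w0 (mem (W b)) (u i) hw0.
have fmax d : d \in W b -> (u i d <= u i f)%N by apply: fmax'.
have fstrict d : d \in W b -> d != f -> (u i d < u i f)%N.
  move=> hd hdf; rewrite ltn_neqAle fmax // andbT.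
  by apply: contra hdf => /eqP /u_inj ->.
exists f; split=> //.
have [w [hw hwf]] : exists w, w \in W b /\ w != f.
  have [x [y [hx hy hxy]]] := card_gt1P hW.
  have [hxf|] := eqVneq x f; last by exists x.
  by exists y; rewrite -hxf eq_sym.
apply/eqP; apply: contraT => hbi.
have := hP i (Some f); rewrite (Util_set1 (fun d => sc_le_W d hf) hbi) /Util.
move: (hS i); case: (b i) => [c|] // _ /=.
have := lottery_lt hW hS hf fmax hw hwf.
have := bonus_ge0 i f; have := bonus_le i c; lra.
Qed.

Lemma PNE_profile b : PNE b -> (2 <= #|W b|)%N ->
  exists g, [/\ b = votes g, forall j, g j \in W b &
    forall i d, d \in W b -> d != g i -> (u i d < u i (g i))%N].
Proof.
move=> hP hW; exists (fun i => odflt (Ordinal hm) (b i)).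
have fav i := PNE_favourite i hP hW.
split=> [|j|i d]; first apply: functional_extensionality => i.
- by rewrite /votes; have [f [-> _ _]] := fav i.
- by have [f [-> ? _]] := fav j.
- by have [f [-> _ fav_i]] := fav i; apply: fav_i.
Qed.

Section DistinctVotes.
Variable g : 'I_n -> 'I_m.
Hypothesis g_le1 : forall d, (sc (votes g) d <= 1)%N.

Lemma W_votes_distinct : (forall j, g j \in W (votes g)) /\ (2 <= #|W (votes g)|)%N.
Proof.
have gW j : g j \in W (votes g) by apply: (@W_of_sc_le1 _ _ _ j).
split=> //; have [j hj] := exists_other_voter (Ordinal n_gt0).
by apply/card_gt1P; exists (g j), (g (Ordinal n_gt0)); rewrite !gW votes_distinct.
Qed.

Lemma Util_votes_distinct i :
  Util (votes g) i = Some ((n%:R)^-1 * \sum_j (u i (g j))%:R + bonus i (g i)).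
Proof. by have [gW hW] := W_votes_distinct; apply: Util_votes. Qed.

End DistinctVotes.

Lemma Util_deviate_unvoted g i c : (forall d, sc (votes g) d <= 1)%N -> sc (votes g) c = 0%N ->
  Util (upd (votes g) i (Some c)) i =
    Some ((n%:R)^-1 * (\sum_j (u i (g j))%:R - (u i (g i))%:R + (u i c)%:R) + bonus i c).
Proof.
move=> g_le1 hc; rewrite upd_votes Util_votes_distinct; last first.
  by rewrite -upd_votes; apply: sc_upd_unvoted_le1.
by rewrite eqxx (sum_upd_at (fun d => (u i d)%:R)).
Qed.

Lemma PNE_distinct_top g : PNE (votes g) -> (forall d, sc (votes g) d <= 1)%N ->
  (forall i d, d \in W (votes g) -> d != g i -> (u i d < u i (g i))%N) -> g = top hm u.
Proof.
move=> hP g_le1 gfav; apply: functional_extensionality => i.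
apply/eqP; apply: contraT => hne; set a := top hm u i in hne *.
have [gW _] := W_votes_distinct g_le1.
have aW : a \notin W (votes g).
  apply/negP => aW; have := gfav i a aW; rewrite eq_sym hne => /(_ isT).
  by rewrite ltnNge top_max.
have := hP i (Some a).
rewrite Util_deviate_unvoted ?sc_votes_notW // Util_votes_distinct //= eqxx (negbTE hne) addr0.
have : (n%:R : R)^-1 * \sum_j (u i (g j))%:R <=
    (n%:R)^-1 * (\sum_j (u i (g j))%:R - (u i (g i))%:R + (u i a)%:R).
  by rewrite ler_wpM2l ?invr_ge0 ?ler0n // -addrA lerDl addrC subr_ge0 ler_nat top_max.
move=> h1 h2; suff : eps <= 0 by rewrite leNgt eps_gt0.
lra.
Qed.

Lemma PNE_cond1 : PNE (votes (top hm u)) -> (forall d, sc (votes (top hm u)) d <= 1)%N ->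
  cond1 R hm u.
Proof.
move=> hP t_le1; split=> [c|l i hil]; first by rewrite -sc_votes.
have hne : top hm u i != top hm u l := votes_distinct t_le1 hil.
have [gW _] := W_votes_distinct t_le1.
have := hP l (Some (top hm u i)).
rewrite (Util_set1 (fun d => sc_le_W d (gW i))) ?Util_votes_distinct //=; last first.
  by rewrite (inj_eq (@Some_inj _)) eq_sym.
rewrite (negbTE hne) eqxx addr0 => h.
by rewrite -natr_sum; apply: (natr_le_avg_absorb n_gt0 eps_n); rewrite natr_sum.
Qed.

Lemma PNE_cond2 g w : PNE (votes g) -> (forall j, g j \in W (votes g)) ->
  (forall i d, d \in W (votes g) -> d != g i -> (u i d < u i (g i))%N) ->
  (2 <= #|W (votes g)|)%N -> w \in W (votes g) -> (2 <= sc (votes g) w)%N ->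
  cond2 R u (W (votes g)) g.
Proof.
move=> hP gW gfav hW hw s_ge2; set X := W (votes g).
have n_eq : n = (#|X| * sc (votes g) w)%N := card_votes_W gW hw.
have X_gt0 : (0 < #|X|)%N by apply: leq_trans hW.
split; last split=> //; last split; last split=> //.
- split=> //; first by rewrite -[X in (_ <= X)%N]card_ord max_card.
  by rewrite n_eq mulnC leq_mul2l s_ge2 orbT.
- by move=> c hc; rewrite -sc_votes (sc_W_eq hc hw) mulnC -n_eq.
move=> i c hc hci.
have c_top : (c == top hm u i) = false.
  apply/negbTE/negP => /eqP c_top; have := gfav i c hc hci.
  by rewrite ltnNge c_top top_max.
have := hP i (Some c).
rewrite (Util_set1 (fun d => sc_le_W d hc)); last by rewrite (inj_eq (@Some_inj _)) eq_sym.
rewrite Util_votes //= c_top addr0 (avg_votes_W n_gt0 gW (fun d => (u i d)%:R)) => h.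
rewrite -natr_sum; apply: (natr_le_avg_absorb X_gt0 (lt_le_trans eps_m (invr_card_ge R X_gt0))).
by rewrite natr_sum; have := bonus_le i (g i); lra.
Qed.

Lemma PNE_characterization b : PNE b -> (2 <= #|W b|)%N ->
  (cond1 R hm u /\ forall i, b i = Some (top hm u i)) \/
  (exists X g, cond2 R u X g /\ forall i, b i = Some (g i)).
Proof.
move=> hP hW; have [g [b_eq gW gfav]] := PNE_profile hP hW; subst b.
pose j0 := Ordinal n_gt0; have [s_le1|s_gt1] := leqP (sc (votes g) (g j0)) 1.
  have g_le1 d : (sc (votes g) d <= 1)%N by apply: leq_trans (sc_le_W _ (gW j0)) s_le1.
  have g_top := PNE_distinct_top hP g_le1 gfav; rewrite g_top in hP g_le1 *.
  by left; split=> //; apply: PNE_cond1.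
by right; exists (W (votes g)), g; split=> //; apply: PNE_cond2 s_gt1.
Qed.

Lemma cond1_PNE : cond1 R hm u -> PNE (votes (top hm u)) /\ (2 <= #|W (votes (top hm u))|)%N.
Proof.
case=> top_le1 top_avg; set t := top hm u in top_le1 top_avg *.
have t_le1 d : (sc (votes t) d <= 1)%N by rewrite sc_votes; apply: top_le1.
have [tW W_ge2] := W_votes_distinct t_le1; split=> // i [c|]; last by rewrite Util_abstain.
rewrite Util_votes_distinct //=.
have [l /eqP <-|unvoted] := pickP (fun l => t l == c).
  have [->|hli] := eqVneq l i.
    by rewrite -[Some (t i)]/(votes t i) upd_id Util_votes_distinct //= lexx.
  rewrite (Util_set1 (fun d => sc_le_W d (tW l))) /=; last first.
    by rewrite (inj_eq (@Some_inj _)) votes_distinct // eq_sym.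
  rewrite eqxx (negbTE (votes_distinct t_le1 hli)).
  by rewrite addr0 (le_trans (top_avg i l hli)) // lerDl ltW.
have c0 : sc (votes t) c = 0%N.
  by rewrite sc_votes; apply/eqP; rewrite cards_eq0; apply/eqP/setP => j; rewrite !inE unvoted.
have c_top : (c == top hm u i) = false by rewrite eq_sym; apply: unvoted.
rewrite Util_deviate_unvoted //= c_top eqxx addr0.
apply: (@le_trans _ _ ((n%:R)^-1 * \sum_j (u i (t j))%:R)); last by rewrite lerDl ltW.
by rewrite ler_wpM2l ?invr_ge0 ?ler0n // -addrA gerDl addrC subr_le0 ler_nat top_max.
Qed.

Section Cond2.
Variables (X : {set 'I_m}) (g : 'I_n -> 'I_m).
Hypotheses (X_ge2 : (2 <= #|X|)%N) (X_half : (2 * #|X| <= n)%N) (gX : forall i, g i \in X)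
  (fibre : forall c, c \in X -> (#|[set i | g i == c]| * #|X|)%N = n)
  (gfav : forall i c, c \in X -> c != g i -> (u i c < u i (g i))%N)
  (fav_le_avg : forall i c, c \in X -> c != g i ->
     (u i c)%:R <= (#|X|%:R)^-1 * \sum_(c' in X) ((u i c')%:R : R)).

Let X_gt0 : (0 < #|X|)%N := ltnW X_ge2.

Lemma sc_cond2 c : c \in X -> (sc (votes g) c * #|X|)%N = n.
Proof. by rewrite sc_votes; apply: fibre. Qed.

Lemma sc_cond2_eq c d : c \in X -> d \in X -> sc (votes g) c = sc (votes g) d.
Proof. by move=> cX dX; apply/eqP; rewrite -(eqn_pmul2r X_gt0) !sc_cond2. Qed.

Lemma sc_cond2_ge2 c : c \in X -> (2 <= sc (votes g) c)%N.
Proof. by move=> cX; rewrite -(leq_pmul2r X_gt0) sc_cond2. Qed.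

Lemma sc_cond2_out c : c \notin X -> sc (votes g) c = 0%N.
Proof.
move=> cX; rewrite sc_votes; apply/eqP; rewrite cards_eq0; apply/eqP/setP => j.
by rewrite !inE; apply: contraNF cX => /eqP <-.
Qed.

Lemma W_cond2 : W (votes g) = X.
Proof.
apply: (W_eq_sc (gX (Ordinal n_gt0))) => d; first by move/sc_cond2_eq; apply.
by move/sc_cond2_out ->; rewrite (leq_trans _ (sc_cond2_ge2 _)).
Qed.

Lemma Util_cond2 i :
  Util (votes g) i = Some ((#|X|%:R)^-1 * \sum_(d in X) (u i d)%:R + bonus i (g i)).
Proof.
have gW j : g j \in W (votes g) by rewrite W_cond2.
by rewrite Util_votes ?W_cond2 // (avg_votes_W n_gt0 gW (fun d => (u i d)%:R)) W_cond2.
Qed.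

Section Deviation.
Variables (i : 'I_n) (c : 'I_m).
Hypothesis cX : c \notin X.

Local Notation b' := (upd (votes g) i (Some c)).

Lemma cardsD1_fav_gt0 : (0 < #|X :\ g i|)%N.
Proof. by have := cardsD1 (g i) X; rewrite gX add1n => XE; rewrite -ltnS -XE. Qed.

Lemma W_cond2_deviate : W b' = X :\ g i.
Proof.
have [x1 x1X'] := card_gt0P cardsD1_fav_gt0.
have x1X : x1 \in X by move: x1X'; rewrite inE => /andP[].
have sc'_in d : d \in X :\ g i -> sc b' d = sc (votes g) d.
  case/setD1P => dgi dX; rewrite [RHS](sc_upd_old (votes g) i (_ : c != d)).
    by rewrite /votes (inj_eq (@Some_inj _)) eq_sym (negbTE dgi).
  by apply: contraNneq cX => ->.
apply: (W_eq_sc x1X') => d dX'.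
  rewrite (sc'_in _ dX') (sc'_in _ x1X').
  by case/setD1P: dX' => _ dX; apply: sc_cond2_eq dX x1X.
move: dX'; rewrite (sc'_in _ x1X') !inE negb_and negbK => /orP[/eqP->|dX].
  have := sc_upd_old (votes g) i (_ : c != g i); rewrite eqxx (sc_cond2_eq (gX i) x1X) => ->.
    by rewrite add1n.
  by apply: contraNneq cX => ->.
have [<-|cd] := eqVneq c d.
  by rewrite sc_upd_new sc_cond2_out // addn0 (leq_ltn_trans (leq_b1 _)) ?sc_cond2_ge2.
by rewrite (leq_ltn_trans (sc_upd_le _ _ cd)) // sc_cond2_out // (ltn_trans _ (sc_cond2_ge2 x1X)).
Qed.

Lemma below_fav d : d \in X :\ g i -> ((u i d)%:R : R) <= (u i (g i))%:R - 1.
Proof.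
by case/setD1P => dgi dX; rewrite lerBrDr natr1 ler_nat; apply: gfav.
Qed.

Lemma voter_deviate_le j :
  \sum_d (chooses u b' j d)%:R * ((u i d)%:R : R) <= (u i (g j))%:R - (g j == g i)%:R.
Proof.
have [gji|gji] := eqVneq (g j) (g i).
  rewrite gji /= mulr1n; apply: (sum_chooses_le u_inj); last first.
    move=> d /andP[dW _].
    by apply: below_fav; rewrite -W_cond2_deviate.
  have [x1 x1X'] := card_gt0P cardsD1_fav_gt0.
  by apply: le_trans (below_fav x1X'); apply: ler0n.
have b'j : b' j = Some (g j) by rewrite /upd ifN //; apply: contra_neq gji => ->.
rewrite subr0 (sum_chooses_own _ _ b'j) // W_cond2_deviate.
by apply/setD1P; split; rewrite ?gX.
Qed.

Lemma expect_cond2_deviate : \sum_d prob R r u b' d * (u i d)%:R <=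
  (#|X|%:R)^-1 * \sum_(d in X) ((u i d)%:R : R) - (#|X|%:R)^-1.
Proof.
have [unif|[-> W'1]] : (r = RC \/ #|W b'| = 1%N) \/ (r = RV /\ #|W b'| != 1%N).
  by case: r; case: eqP; auto.
  rewrite expect_uniform // W_cond2_deviate.
  exact: avg_setD1_le (gX i) cardsD1_fav_gt0 below_fav.
have gW j : g j \in W (votes g) by rewrite W_cond2.
have nE : (n%:R : R) = (sc (votes g) (g i))%:R * #|X|%:R by rewrite -natrM sc_cond2.
rewrite expect_RV // (le_trans (ler_wpM2l _ (ler_sum _ (fun j _ => voter_deviate_le j)))) //.
  by rewrite invr_ge0 ler0n.
rewrite sumrB -natr_card_set -sc_votes mulrBr (avg_votes_W n_gt0 gW (fun d => (u i d)%:R)).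
rewrite W_cond2 nE invfM mulrAC mulVf ?mul1r // pnatr_eq0 -lt0n.
exact: leq_trans (sc_cond2_ge2 (gX i)).
Qed.

End Deviation.

Lemma cond2_PNE : PNE (votes g).
Proof.
move=> i [c|]; last by rewrite Util_abstain.
rewrite Util_cond2 /=.
have [->|cgi] := eqVneq c (g i).
  by rewrite -[Some (g i)]/(votes g i) upd_id Util_cond2 /= lexx.
have [cX|cX] := boolP (c \in X).
  have c_top : (c == top hm u i) = false.
    by apply: contraTF (gfav cX cgi) => /eqP ->; rewrite -leqNgt top_max.
  rewrite (Util_set1 (fun d => sc_le_W d (_ : c \in W (votes g)))) ?W_cond2 //=; last first.
    by rewrite (inj_eq (@Some_inj _)) eq_sym.
  by rewrite c_top addr0 (le_trans (fav_le_avg cX cgi)) // lerDl bonus_ge0.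
rewrite /Util upd_at /=.
have := expect_cond2_deviate i cX; have := lt_le_trans eps_m (invr_card_ge R X_gt0).
have := bonus_le i c; have := bonus_ge0 i (g i); lra.
Qed.

End Cond2.

Lemma cond2_PNE_votes X g : cond2 R u X g -> PNE (votes g) /\ (2 <= #|W (votes g)|)%N.
Proof.
case=> [[X_ge2 _ X_half] [gX [fibre [gfav avg]]]].
rewrite (W_cond2 X_ge2 X_half gX fibre); split=> //.
exact: (cond2_PNE X_ge2 X_half gX fibre gfav avg).
Qed.
End Equilibria.

Unset Implicit Arguments.

Theorem theorem4 (R : realFieldType) (m n : nat) (hm : (0 < m)%N)
  (hn : (2 <= n)%N) (eps : R)
  (heps0 : 0 < eps) (heps_m : eps < (m%:R)^-1) (heps_n : eps < (n%:R)^-1)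
  (u : 'I_n -> 'I_m -> nat) (u_inj : forall i, injective (u i))
  (r : rule) :
  ((exists b : 'I_n -> option 'I_m, PNE eps hm r u b /\ (2 <= #|W b|)%N) <->
     (cond1 R hm u \/ exists X g, cond2 R u X g)) /\
  (cond1 R hm u -> PNE eps hm r u (fun i => Some (top hm u i))) /\
  (forall X g, cond2 R u X g -> PNE eps hm r u (fun i => Some (g i))) /\
  (forall b : 'I_n -> option 'I_m, PNE eps hm r u b -> (2 <= #|W b|)%N ->
     (cond1 R hm u /\ forall i, b i = Some (top hm u i)) \/
     (exists X g, cond2 R u X g /\ forall i, b i = Some (g i))).
Proof.
split; first split=> [[b [hP hW]]|[h1|[X [g h2]]]].
- have := PNE_characterization hn heps0 heps_m heps_n u_inj hP hW.
  by case=> [[h1 _]|[X [g [h2 _]]]]; [left | right; exists X, g].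
- by exists (votes (top hm u)); apply: cond1_PNE.
- by exists (votes g); apply: cond2_PNE_votes h2.
split; first by move=> h1; case: (cond1_PNE r hn heps0 h1).
split; first by move=> X g h2; case: (cond2_PNE_votes hm r hn heps0 heps_m u_inj h2).
exact: PNE_characterization.
Qed.
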